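(* Let $m,n\ge0$ be integers with $m+n$ even. If $n>m+2$, then there is no alternating $\mathcal B_{m,n}$-permutation.
   Context: For integers $i\le j$, $[i,j]=\{\ell\in\mathbb Z: i\le\ell\le j\}$ and $[N]=[1,N]$. $\mathcal B_{m,n}$ is the collection of nonempty subsets $I\subseteq[m+n]$ such that whenever $|I|\ge2$, $I\cap[m+1,m+n]$ is either $\emptyset$ or $[m+r,m+n]$ for some $1\le r\le n$ (a building set on $[m+n]$). For a building set $\mathcal B$ on $S$ (collection of nonempty subsets of $S$ containing all singletons, closed under unions of intersecting members; its connected components are its inclusion-maximal members; $\mathcal B|_I=\{J\in\mathcal B:J\subseteq I\}$) with $|S|=N$, a $\mathcal B$-permutation is a sequence $(x_1\cdots x_N)$ listing each element of $S$ once such that for each $i$, $x_i$ and $\max\{x_1,\dots,x_i\}$ lie in the same connected component of $\mathcal B|_{\{x_1,\dots,x_i\}}$; it is alternating if $x_1>x_2<x_3>\cdots$. *)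

From mathcomp Require Import all_boot.
Set Implicit Arguments. Unset Strict Implicit. Unset Printing Implicit Defensive.

Definition building_set (k : nat) (S : {set 'I_k}) (B : {set {set 'I_k}}) : bool :=
  [forall J in B, (J != set0) && (J \subset S)] &&
  [forall x in S, [set x] \in B] &&
  [forall J in B, forall K in B, (J :&: K != set0) ==> (J :|: K \in B)].

Definition restrict (k : nat) (B : {set {set 'I_k}}) (I : {set 'I_k}) :
  {set {set 'I_k}} := [set J in B | J \subset I].

Definition components (k : nat) (B : {set {set 'I_k}}) : {set {set 'I_k}} :=
  [set J in B | [forall K in B, (J \subset K) ==> (K == J)]].

Definition same_component (k : nat) (B : {set {set 'I_k}}) (x y : 'I_k) : bool :=
  [exists J in components B, (x \in J) && (y \in J)].

(* Index i here is 0-based: prefix = take i.+1 s. *)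
Definition B_permutation (k : nat) (S : {set 'I_k}) (B : {set {set 'I_k}})
  (s : seq 'I_k) : Prop :=
  perm_eq s (enum S) /\
  forall i x, i < size s -> x = nth x s i ->
    let pre := take i.+1 s in
    exists2 y, (y \in pre) && all (fun z : 'I_k => (z <= y)%N) pre &
      same_component (restrict B [set z in pre]) x y.

Definition alternating (k : nat) (s : seq 'I_k) : Prop :=
  forall j, j.+1 < size s ->
    let t := map (@nat_of_ord k) s in
    if odd j then nth 0 t j < nth 0 t j.+1 else nth 0 t j > nth 0 t j.+1.

(* B_{m,n} on [m+n] = {1,...,m+n} inside 'I_(m+n).+1 *)
Definition ground (m n : nat) : {set 'I_(m + n).+1} := [set i : 'I_(m + n).+1 | 0 < i].

Definition Bmn (m n : nat) : {set {set 'I_(m + n).+1}} :=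
  [set I | [&& I != set0, I \subset ground m n &
     (1 < #|I|) ==>
       ((I :&: [set i : 'I_(m + n).+1 | m.+1 <= i] == set0) ||
        [exists r : 'I_n.+1, (0 < r) && (I :&: [set i : 'I_(m + n).+1 | m.+1 <= i] == [set i : 'I_(m + n).+1 | m + r <= i])])]].

From mathcomp Require Import all_boot zify.

Set Implicit Arguments.
Unset Strict Implicit.
Unset Printing Implicit Defensive.

(** Call the elements of [[m+1, m+n]] big and those of [[1, m]] small. In a
    [B_{m,n}]-permutation, a letter that is not a left-to-right maximum shares
    a component of size at least 2 with the current maximum, and the big part
    of such a component is an upper interval [[m+r, m+n]]. Since [m+n] sits at
    a peak of an alternating word, the letter just before it is such a letter;
    so a big letter before [m+n] would force [m+n] into the earlier prefix.
    After [m+n], a big letter at an ascent would likewise drag its (later)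
    successor into the prefix. So, past [m+n], every other letter is small:
    there are at most [m+2] big letters in all, whereas there are [n]. *)

Lemma B_permutation_nonmax_component k (S : {set 'I_k}) B s i (x0 w : 'I_k) :
  B_permutation S B s -> i < size s ->
  w \in take i.+1 s -> nth x0 s i < w ->
  exists2 J, J \in B &
    [/\ 1 < #|J|, {subset J <= take i.+1 s}, nth x0 s i \in J &
        exists2 y, y \in J & {in take i.+1 s, forall z : 'I_k, z <= y}].
Proof.
case=> _ step lt_i_s w_pre lt_w.
have [y /andP[y_pre /allP y_max]] :=
  step i (nth x0 s i) lt_i_s (set_nth_default _ _ lt_i_s).
case/existsP=> J /andP[+ /andP[xJ yJ]]; rewrite !inE => /andP[/andP[JB Jpre] _].
exists J => //; split=> //.
- apply/card_gt1P; exists (nth x0 s i), y; split=> //.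
  by apply/eqP=> xy; move: (y_max w w_pre); rewrite -xy leqNgt lt_w.
- by move=> z /(subsetP Jpre); rewrite inE.
- by exists y.
Qed.

Lemma Bmn_upper_closed m n J (w z : 'I_(m + n).+1) :
  J \in Bmn m n -> 1 < #|J| -> w \in J -> m < w -> w <= z -> z \in J.
Proof.
move=> + J_gt1 wJ lt_m_w le_w_z; rewrite inE => /and3P[_ _ /implyP/(_ J_gt1)].
case/orP=> [/eqP/setP/(_ w)|/existsP[r /andP[_ /eqP/setP bigJ]]].
  by rewrite !inE wJ lt_m_w.
move: (bigJ w) (bigJ z); rewrite !inE wJ lt_m_w /= => /esym le_r_w.
by rewrite (leq_trans le_r_w le_w_z) => /andP[].
Qed.

Lemma val_enum_ground m n : map val (enum (ground m n)) = iota 1 (m + n).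
Proof.
have -> : enum (ground m n) = [seq i <- enum 'I_(m + n).+1 | 0 < val i].
  by rewrite [in LHS]/enum_mem -enumT; apply: eq_filter => i /=; rewrite inE.
rewrite -(filter_map val (fun x => 0 < x)) val_enum_ord /=.
by apply/all_filterP/allP => i; rewrite mem_iota => /andP[].
Qed.

Lemma count_big_ground m n :
  count (fun x : 'I_(m + n).+1 => m < x) (enum (ground m n)) = n.
Proof.
rewrite -(count_map val (fun x => m < x)) val_enum_ground iotaD count_cat.
rewrite (@eq_in_count _ _ pred0) => [|x]; last first.
  by rewrite mem_iota add1n ltnS => /andP[_]; rewrite leqNgt => /negbTE.
rewrite (@eq_in_count _ _ predT (iota (1 + m) n)) => [|x]; last first.
  by rewrite mem_iota add1n => /andP[].
by rewrite count_pred0 count_predT size_iota.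
Qed.

Lemma count_small_ground m n :
  count (fun x : 'I_(m + n).+1 => x <= m) (enum (ground m n)) = m.
Proof.
have := count_predC (fun x : 'I_(m + n).+1 => m < x) (enum (ground m n)).
rewrite count_big_ground -(size_map val) val_enum_ground size_iota.
rewrite (@eq_count _ _ (fun x : 'I_(m + n).+1 => x <= m)) => [|x]; first by lia.
by rewrite /= -leqNgt.
Qed.

Lemma count_true_le_false_if_evens_false (u : seq bool) :
  (forall i, i.+1 < size u -> ~~ odd i -> ~~ nth false u i) ->
  count id u <= (count negb u).+1.
Proof.
move: {2}(size u) (leqnn (size u)) => k.
elim: k u => [|k IHk] [|b [|c v]] //= size_u evens_false.
  by case: b {evens_false}.
have b_false : ~~ b by apply: (evens_false 0).
have IHv : count id v <= (count negb v).+1.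
  apply: IHk (ltnW size_u) _ => i lt_i even_i.
  by apply: (evens_false i.+2) => //=; rewrite negbK.
rewrite (negbTE b_false); move: IHv {evens_false b_false}.
by case: c => /=; lia.
Qed.

Section AlternatingBmnPermutation.

Variables m n : nat.
Local Notation T := 'I_(m + n).+1.
Variable s : seq T.
Hypothesis s_Bperm : B_permutation (ground m n) (Bmn m n) s.
Hypothesis s_alt : alternating s.
Hypothesis n_gt0 : 0 < n.

Local Notation big := (fun x : T => m < x).
Local Notation small := (fun x : T => x <= m).
Local Notation p := (index ord_max s).

Lemma uniq_Bmn_perm : uniq s.
Proof. by rewrite (perm_uniq (proj1 s_Bperm)) enum_uniq. Qed.

Lemma max_mem : ord_max \in s.
Proof. by rewrite (perm_mem (proj1 s_Bperm)) mem_enum inE /= addn_gt0 n_gt0 orbT. Qed.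

Lemma max_index_lt : p < size s.
Proof. by rewrite index_mem max_mem. Qed.

Lemma nth_max_index : nth ord0 s p = ord_max.
Proof. exact: nth_index max_mem. Qed.

Lemma alternating_nth j : j.+1 < size s ->
  if odd j then nth ord0 s j < nth ord0 s j.+1 else nth ord0 s j.+1 < nth ord0 s j.
Proof. by move=> lt_j; move: (s_alt lt_j) => /=; rewrite !(nth_map ord0) // ltnW. Qed.

Lemma mem_take_nth i j : i < j -> i < size s -> nth ord0 s i \in take j s.
Proof. by move=> lt_ij lt_i; rewrite in_take ?mem_nth // index_uniq ?uniq_Bmn_perm. Qed.

Lemma nth_notin_take j : j < size s -> nth ord0 s j \notin take j s.
Proof. by move=> lt_j; rewrite in_take ?mem_nth // index_uniq ?uniq_Bmn_perm ?ltnn. Qed.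

Lemma max_index_even : ~~ odd p.
Proof.
case def_p: p => [|q] //=; apply/negP => even_q.
have lt_q1 : q.+1 < size s by rewrite -def_p; exact: max_index_lt.
have := alternating_nth lt_q1; rewrite (negbTE even_q) -def_p nth_max_index.
by rewrite ltnNge leq_ord.
Qed.

Lemma small_before_max i : i < p -> nth ord0 s i <= m.
Proof.
move=> lt_i_p; rewrite leqNgt; apply/negP => big_i.
have [q def_p] : exists q, p = q.+2.
  by move: max_index_even lt_i_p; case: p => [|[|q]] //; exists q.
have lt_q2 : q.+2 < size s by rewrite -def_p; exact: max_index_lt.
have even_q : ~~ odd q by move: max_index_even; rewrite def_p /= negbK.
have descent : nth ord0 s q.+1 < nth ord0 s q.
  by have := alternating_nth (ltnW lt_q2); rewrite (negbTE even_q).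
have q_pre : nth ord0 s q \in take q.+2 s by apply: mem_take_nth; lia.
have i_pre : nth ord0 s i \in take q.+2 s by apply: mem_take_nth; lia.
have [J JB [J_gt1 J_pre _ [y yJ y_max]]] :=
  B_permutation_nonmax_component s_Bperm (ltnW lt_q2) q_pre descent.
have big_y : m < y := leq_trans big_i (y_max _ i_pre).
have := J_pre _ (Bmn_upper_closed (z := ord_max) JB J_gt1 yJ big_y (leq_ord y)).
by rewrite -nth_max_index def_p (negbTE (nth_notin_take lt_q2)).
Qed.

Lemma small_after_max j : odd j -> p < j -> j.+1 < size s -> nth ord0 s j <= m.
Proof.
move=> odd_j lt_p_j lt_j1; rewrite leqNgt; apply/negP => big_j.
have := alternating_nth lt_j1; rewrite odd_j => ascent.
have lt_x_max : nth ord0 s j < ord_max := leq_trans ascent (leq_ord _).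
have max_pre : ord_max \in take j.+1 s.
  by rewrite -nth_max_index; apply: mem_take_nth; [lia | exact: max_index_lt].
have [J JB [J_gt1 J_pre xJ _]] :=
  B_permutation_nonmax_component s_Bperm (ltnW lt_j1) max_pre lt_x_max.
have := J_pre _ (Bmn_upper_closed JB J_gt1 xJ big_j (ltnW ascent)).
by rewrite (negbTE (nth_notin_take lt_j1)).
Qed.

Lemma alternating_Bmn_perm_bound : n <= m + 2.
Proof.
have decomp : s = take p s ++ ord_max :: drop p.+1 s.
  by rewrite -{1}(cat_take_drop p s) (drop_nth ord0 max_index_lt) nth_max_index.
have big_prefix : count big (take p s) = 0.
  rewrite (@eq_in_count _ _ pred0) ?count_pred0 // => x x_pre.
  have x_s := mem_take x_pre.
  apply/negbTE; rewrite -leqNgt -(nth_index ord0 x_s) small_before_max //.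
  by rewrite -(in_take _ x_s).
have big_suffix : count big (drop p.+1 s) <= (count small (drop p.+1 s)).+1.
  have small_eq : preim big negb =1 small by move=> x; rewrite /= -leqNgt.
  have := @count_true_le_false_if_evens_false (map big (drop p.+1 s)).
  rewrite !count_map (eq_count small_eq); apply=> i.
  rewrite size_map size_drop => lt_i even_i.
  rewrite (nth_map ord0) ?size_drop ?(ltnW lt_i) // nth_drop -leqNgt.
  apply: small_after_max; last by lia.
  - by rewrite addSn /= oddD (negbTE max_index_even) (negbTE even_i).
  - by rewrite addSn ltnS leq_addr.
have small_suffix : count small (drop p.+1 s) <= m.
  have := count_small_ground m n; rewrite -(permP (proj1 s_Bperm)) {1}decomp.
  by rewrite count_cat /=; lia.
have := count_big_ground m n; rewrite -(permP (proj1 s_Bperm)) {1}decomp.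
by rewrite count_cat /= big_prefix -{1}(addn0 m) ltn_add2l n_gt0; lia.
Qed.

End AlternatingBmnPermutation.

Theorem lemma6p2 (m n : nat) :
  ~~ odd (m + n) -> m + 2 < n ->
  ~ (exists s : seq 'I_(m + n).+1,
        B_permutation (ground m n) (Bmn m n) s /\ alternating s).
Proof.
move=> _ lt_n [s [s_Bperm s_alt]].
have n_gt0 : 0 < n := leq_ltn_trans (leq0n _) lt_n.
by have := alternating_Bmn_perm_bound s_Bperm s_alt n_gt0; rewrite leqNgt lt_n.
Qed.
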